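(* There is an absolute constant $c>0$ such that for all sufficiently large $n$ there is no graph on $n$ vertices in which every induced subgraph on $c\log^3 n/\log\log n$ vertices contains both a clique of size $\log n$ and an independent set of size $\log n$.
   Context: Logarithms are natural; floors and ceilings are ignored. *)

From mathcomp Require Import all_boot.
From Stdlib Require Import Reals.
Set Implicit Arguments. Unset Strict Implicit. Unset Printing Implicit Defensive.

(* floor of a real, as a natural number (0 for negative inputs) *)
Definition floor_nat (x : R) : nat := Z.to_nat (Int_part x).

(* A simple graph on vertex set 'I_n is a symmetric irreflexive relation E. *)
Definition is_clique (n : nat) (E : rel 'I_n) (K : {set 'I_n}) : Prop :=
  forall x y, x \in K -> y \in K -> x != y -> E x y.

Definition is_independent (n : nat) (E : rel 'I_n) (K : {set 'I_n}) : Prop :=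
  forall x y, x \in K -> y \in K -> x != y -> ~~ E x y.

(* Write [L = ln n], [k = floor L] and suppose every set of
   [m = floor (L^3 / (200 ln L))] vertices contains an independent set and a
   clique of size [L].  By averaging, every set [Y] of at least [m] vertices
   contains at least [(|Y|/m)^k] independent [k]-sets; comparing this with the
   trivial bound [|Y|^j] at [j = k/2] shows that for some [j >= k/2] the number
   of independent [(j+1)]-sets exceeds [|Y| / 2m^2] times the number of
   independent [j]-sets, so some independent [j]-set has [|Y| / 2m^2] common
   non-neighbours in [Y].  Recursing into those non-neighbours
   [t = floor (L / (20 ln L))] times yields an independent set of size
   [t k/2] inside any set of [m (2m^2)^t] vertices, and [n] exceeds this.
   Removing [k - 1] such sets one after the other gives [(k-1) t k/2 >= m]
   vertices covered by [k - 1] independent sets, hence with no clique of size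
   [k]: an [m]-subset of them violates the clique condition. *)

From mathcomp Require Import all_boot zify.
From Stdlib Require Import Reals Lra Lia Psatz.
(* Reals redefines [^] on [nat]; restore [expn]. *)
Import ssrnat.
Set Implicit Arguments. Unset Strict Implicit. Unset Printing Implicit Defensive.

Lemma exists_subset_card (T : finType) (A : {set T}) j :
  j <= #|A| -> exists B : {set T}, B \subset A /\ #|B| = j.
Proof.
elim: j => [|j IHj] jA; first by exists set0; rewrite sub0set cards0.
have [B [BA cardB]] := IHj (ltnW jA).
have : 0 < #|A :\: B| by rewrite cardsDS // cardB subn_gt0.
case/card_gt0P => x; rewrite inE => /andP[xNB xA].
exists (x |: B); split; first by rewrite subUset sub1set xA BA.
by rewrite cardsU1 xNB cardB.
Qed.

Lemma card_set_in_sum (T : finType) (A : {set T}) (P : pred T) :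
  #|[set x in A | P x]| = \sum_(x in A) P x.
Proof.
rewrite -sum1_card big_mkcond [RHS]big_mkcond /=.
by apply: eq_bigr => x _; rewrite inE; case: (x \in A); case: (P x).
Qed.

Lemma bernoulli_leq N k : k <= N -> (N - k) * N ^ k <= N * (N - 1) ^ k.
Proof.
elim: k => [|k IHk] kN; first by rewrite !expn0 subn0.
have {}IHk := IHk (ltnW kN).
have step : N * (N - k.+1) <= (N - 1) * (N - k) by nia.
rewrite !expnS mulnCA mulnA.
apply: (leq_trans (leq_mul step (leqnn _))).
by rewrite -mulnA [leqRHS]mulnCA leq_mul2l IHk orbT.
Qed.

Lemma geometric_decay (f : nat -> nat) a d N Q :
  (forall i, i < d -> f (a + i).+1 * Q <= N * f (a + i)) ->
  f (a + d) * Q ^ d <= N ^ d * f a.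
Proof.
elim: d => [|d IHd] decay; first by rewrite addn0 !expn0 muln1 mul1n.
have {}IHd := IHd (fun i id => decay i (ltnW id)).
rewrite addnS !expnS mulnA.
apply: (leq_trans (leq_mul (decay d (ltnSn d)) (leqnn _))).
by rewrite -!mulnA leq_mul2l IHd orbT.
Qed.

Lemma expn_lt_double_square m k d :
  0 < m -> 0 < d -> k <= 2 * d -> m ^ k < (2 * m ^ 2) ^ d.
Proof.
move=> m_gt0 d_gt0 kd.
rewrite expnMn -expnM.
have mk : m ^ k <= m ^ (2 * d) by rewrite leq_pexp2l.
have two : 2 <= 2 ^ d by rewrite -{1}(expn1 2) leq_pexp2l.
have := expn_gt0 m k; rewrite m_gt0 => /= mk_gt0.
have := leq_mul two mk; lia.
Qed.

Section IndependentSets.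

Variables (T : finType) (E : rel T).
Implicit Types (I J K S Y : {set T}) (x y : T) (j k : nat).

Definition independent I := [forall x in I, forall y in I, (x != y) ==> ~~ E x y].

Lemma independentP I :
  reflect (forall x y, x \in I -> y \in I -> x != y -> ~~ E x y) (independent I).
Proof.
apply: (iffP forallP) => [indI x y xI yI xy | indI x].
  by move: (indI x) => /implyP /(_ xI) /forallP /(_ y) /implyP /(_ yI) /implyP; apply.
by apply/implyP => xI; apply/forallP => y; apply/implyP => yI; apply/implyP; apply: indI.
Qed.

Lemma independentS I J : J \subset I -> independent I -> independent J.
Proof.
by move=> /subsetP JI /independentP indI; apply/independentP => x y xJ yJ; apply: indI; apply: JI.
Qed.

Definition clique (K : {set T}) : Prop := forall x y, x \in K -> y \in K -> x != y -> E x y.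

Lemma clique_independent_card_le1 I (K : {set T}) :
  clique K -> independent I -> #|K :&: I| <= 1.
Proof.
move=> clK /independentP indI; apply/card_le1_eqP => x y.
rewrite !inE => /andP[xK xI] /andP[yK yI]; apply/eqP/negP => /negP xy.
by have := indI y x yI xI xy; rewrite clK.
Qed.

Definition indep_sets Y j := [set I : {set T} | (I \subset Y) && (#|I| == j) && independent I].

(* Exactly the [y] in [Y] for which [y |: I] is a larger independent set. *)
Definition nonnbrs Y I := [set y in Y | (y \notin I) && [forall x in I, ~~ E x y]].

Lemma nonnbrs_sub Y I : nonnbrs Y I \subset Y.
Proof. by apply/subsetP => y; rewrite inE => /andP[]. Qed.

Lemma nonnbrs_disjoint Y I : [disjoint I & nonnbrs Y I].
Proof. by rewrite -setI_eq0; apply/eqP/setP => y; rewrite !inE; case: (y \in I); rewrite ?andbF. Qed.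

Lemma nonnbrsP Y I x y : x \in I -> y \in nonnbrs Y I -> ~~ E x y.
Proof. by move=> xI; rewrite inE => /and3P[_ _ /forallP/(_ x)/implyP]; apply. Qed.

Lemma card_indep_sets_le_sum Y j :
  #|indep_sets Y j.+1| <= \sum_(y in Y) #|[set J in indep_sets Y j.+1 | y \in J]|.
Proof.
under eq_bigr => y _ do rewrite card_set_in_sum.
rewrite exchange_big /= -sum1_card; apply: leq_sum => J.
rewrite inE => /andP[/andP[JY /eqP cardJ] _].
rewrite -card_set_in_sum.
suff -> : [set y in Y | y \in J] = J by rewrite cardJ.
by apply/setP => y; rewrite inE andb_idl // => /(subsetP JY).
Qed.

Lemma card_indep_sets_through Y j y :
  #|[set J in indep_sets Y j.+1 | y \in J]| <= #|[set I in indep_sets Y j | y \in nonnbrs Y I]|.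
Proof.
rewrite -(@card_in_imset _ _ (fun J => J :\ y)); last first.
  move=> J1 J2; rewrite !inE => /andP[_ yJ1] /andP[_ yJ2] eqJ.
  by rewrite -(setD1K yJ1) -(setD1K yJ2) eqJ.
apply/subset_leq_card/subsetP => _ /imsetP[J + ->].
rewrite !inE => /andP[/andP[/andP[JY /eqP cardJ] indJ] yJ].
rewrite (subset_trans (subD1set J y) JY) (independentS (subD1set J y) indJ).
have -> : #|J :\ y| == j by move: cardJ; rewrite (cardsD1 y J) yJ add1n => -[->].
rewrite (subsetP JY) //= eqxx /=; apply/forallP => x; apply/implyP.
by rewrite !inE => /andP[xy xJ]; move/independentP: indJ; apply.
Qed.

(* Each independent [(j+1)]-set is some independent [j]-set [I] plus a vertex
   of [nonnbrs Y I]. *)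
Lemma card_indep_sets_succ Y j :
  #|indep_sets Y j.+1| <= \sum_(I in indep_sets Y j) #|nonnbrs Y I|.
Proof.
apply: (leq_trans (card_indep_sets_le_sum Y j)).
apply: (@leq_trans (\sum_(y in Y) #|[set I in indep_sets Y j | y \in nonnbrs Y I]|)).
  by apply: leq_sum => y _; apply: card_indep_sets_through.
under eq_bigr => y _ do rewrite card_set_in_sum.
rewrite exchange_big /=; apply: leq_sum => I _.
rewrite -card_set_in_sum; apply/subset_leq_card/subsetP => y.
by rewrite !inE => /andP[_ ->].
Qed.

Lemma card_indep_sets_le Y j : #|indep_sets Y j| <= #|Y| ^ j.
Proof.
elim: j => [|j IHj].
  rewrite expn0; apply/card_le1_eqP => I1 I2; rewrite !inE.
  by move=> /andP[/andP[_ /eqP/cards0_eq ->] _] /andP[/andP[_ /eqP/cards0_eq ->] _].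
apply: (leq_trans (card_indep_sets_succ Y j)).
apply: (@leq_trans (\sum_(I in indep_sets Y j) #|Y|)).
  by apply: leq_sum => I _; apply/subset_leq_card/nonnbrs_sub.
by rewrite sum_nat_const expnSr leq_mul2r IHj orbT.
Qed.

Lemma sum_indep_sets_setD1 Y k :
  \sum_(y in Y) #|indep_sets (Y :\ y) k| = #|indep_sets Y k| * (#|Y| - k).
Proof.
have avoid y : indep_sets (Y :\ y) k = [set I in indep_sets Y k | y \notin I].
  by apply/setP => I; rewrite !inE subsetD1 -!andbA; case: (y \in I); rewrite /= ?andbF ?andbT.
under eq_bigr => y _ do rewrite avoid card_set_in_sum.
rewrite exchange_big /= -sum_nat_const; apply: eq_bigr => I.
rewrite inE => /andP[/andP[IY /eqP cardI] _].
rewrite -card_set_in_sum.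
suff -> : [set y in Y | y \notin I] = Y :\: I by rewrite cardsDS // cardI.
by apply/setP => y; rewrite !inE andbC.
Qed.

Lemma exists_indep_many_nonnbrs Y j Q :
  0 < #|indep_sets Y j| ->
  #|Y| * #|indep_sets Y j| <= #|indep_sets Y j.+1| * Q ->
  exists2 I, I \in indep_sets Y j & #|Y| <= #|nonnbrs Y I| * Q.
Proof.
move=> sets_gt0 growth.
have [I Ij maxI] := eq_bigmax_cond (fun I => #|nonnbrs Y I|) sets_gt0.
exists I => //.
have sum_le : \sum_(I' in indep_sets Y j) #|nonnbrs Y I'| <= #|indep_sets Y j| * #|nonnbrs Y I|.
  rewrite -sum_nat_const -maxI; apply: leq_sum => I' I'j.
  exact: (@leq_bigmax_cond _ (mem (indep_sets Y j)) (fun I => #|nonnbrs Y I|)).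
have := leq_trans growth (leq_mul (leq_trans (card_indep_sets_succ Y j) sum_le) (leqnn Q)).
by rewrite mulnC -mulnA leq_pmul2l.
Qed.

Definition subsets_have_indep m k := forall S : {set T}, #|S| = m ->
  exists I, [/\ I \subset S, independent I & k <= #|I|].

Section Supersaturation.

Variables m k : nat.
Hypothesis indep_m_k : subsets_have_indep m k.
Hypotheses (k_gt0 : 0 < k) (k_le_m : k <= m).

Lemma subsets_have_indep_le : m <= #|T| -> k <= m.
Proof.
move=> mT; have [S [_ cardS]] : exists S : {set T}, S \subset setT /\ #|S| = m.
  by apply: exists_subset_card; rewrite cardsT.
have [I [IS _ kI]] := indep_m_k cardS.
by rewrite -cardS (leq_trans kI (subset_leq_card IS)).
Qed.

Lemma indep_sets_gt0 Y j : m <= #|Y| -> j <= k -> 0 < #|indep_sets Y j|.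
Proof.
move=> mY jk; have [S [SY cardS]] := exists_subset_card mY.
have [I [IS indI kI]] := indep_m_k cardS.
have [J [JI cardJ]] := exists_subset_card (leq_trans jk kI).
apply/card_gt0P; exists J; rewrite inE cardJ eqxx (independentS JI indI).
by rewrite andbT (subset_trans JI (subset_trans IS SY)).
Qed.

(* Averaging over the sets [Y :\ y] gives
   [|Y| (|Y| - 1)^k <= |indep_sets Y k| (|Y| - k) m^k] by induction on [|Y|];
   [bernoulli_leq] then cancels the factor [|Y| - k]. *)
Lemma indep_sets_supersaturation Y :
  m <= #|Y| -> #|Y| ^ k <= #|indep_sets Y k| * m ^ k.
Proof.
move=> mY; have := subnKC mY; move: (#|Y| - m) => d.
elim: d Y {mY} => [|d IHd] Y /esym cardY.
  by rewrite cardY addn0 -{1}(mul1n (m ^ k)) leq_mul2r indep_sets_gt0 ?cardY ?addn0 ?orbT.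
have drop y : y \in Y -> (#|Y| - 1) ^ k <= #|indep_sets (Y :\ y) k| * m ^ k.
  move=> yY; have cardYy : #|Y :\ y| = m + d.
    by move: cardY; rewrite (cardsD1 y Y) yY addnS => -[].
  by have := IHd _ (esym cardYy); rewrite cardYy cardY addnS subn1.
have averaged : #|Y| * (#|Y| - 1) ^ k <= #|indep_sets Y k| * (#|Y| - k) * m ^ k.
  rewrite -sum_indep_sets_setD1 big_distrl /= -sum_nat_const.
  by apply: leq_sum => y yY; apply: drop.
have kY : k < #|Y| by rewrite cardY; lia.
have := leq_trans (bernoulli_leq (ltnW kY)) averaged.
by rewrite [_ * (#|Y| - k)]mulnC -mulnA leq_pmul2l ?subn_gt0.
Qed.

(* If the counts shrank by a factor [2 m^2 / |Y|] at each of the [k - k/2]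
   steps from [k/2] to [k], they would fall below the supersaturation bound. *)
Lemma indep_sets_growth Y : m <= #|Y| -> exists j,
  [/\ k %/ 2 <= j, j < k & #|Y| * #|indep_sets Y j| <= #|indep_sets Y j.+1| * (2 * m ^ 2)].
Proof.
move=> mY; set Q := 2 * m ^ 2.
have m_gt0 : 0 < m by apply: leq_trans k_le_m.
have Y_gt0 : 0 < #|Y| by apply: leq_trans mY.
have [/existsP[j /andP[jk growth]] | /existsPn shrink] :=
  boolP [exists j : 'I_k, (k %/ 2 <= j) && (#|Y| * #|indep_sets Y j| <= #|indep_sets Y j.+1| * Q)].
  by exists j.
set d := k - k %/ 2.
have dk : k %/ 2 + d = k by rewrite subnKC // leq_div.
have decay := @geometric_decay (fun j => #|indep_sets Y j|) (k %/ 2) d #|Y| Q.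
rewrite dk in decay.
have {}decay : #|indep_sets Y k| * Q ^ d <= #|Y| ^ d * #|indep_sets Y (k %/ 2)|.
  apply: decay => i id; have ik : k %/ 2 + i < k by rewrite -{2}dk ltn_add2l.
  by have := shrink (Ordinal ik); rewrite /= leq_addr /= -ltnNge => /ltnW.
have : #|Y| ^ k * Q ^ d <= m ^ k * #|Y| ^ k.
  apply: (leq_trans (leq_mul (indep_sets_supersaturation mY) (leqnn _))).
  rewrite mulnAC mulnC leq_mul2l (leq_trans decay) ?orbT //.
  by rewrite -{2}dk expnD mulnC leq_mul2r card_indep_sets_le orbT.
rewrite mulnC leq_pmul2r ?expn_gt0 ?Y_gt0 // leqNgt.
by rewrite expn_lt_double_square //; rewrite /d; lia.
Qed.

Lemma indep_many_nonnbrs Y : m <= #|Y| -> exists I,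
  [/\ I \subset Y, k %/ 2 <= #|I|, independent I & #|Y| <= #|nonnbrs Y I| * (2 * m ^ 2)].
Proof.
move=> mY; have [j [kj jk growth]] := indep_sets_growth mY.
have [I] := exists_indep_many_nonnbrs (indep_sets_gt0 mY (ltnW jk)) growth.
by rewrite inE => /andP[/andP[IY /eqP cardI] indI] many; exists I; rewrite cardI.
Qed.

End Supersaturation.

Hypothesis E_sym : symmetric E.

(* Repeatedly take [I] from [indep_many_nonnbrs] and continue inside
   [nonnbrs Y I]: the pieces are pairwise non-adjacent. *)
Lemma indep_of_large_set m k t Y :
  subsets_have_indep m k -> 0 < k -> k <= m ->
  m * (2 * m ^ 2) ^ t <= #|Y| ->
  exists I, [/\ I \subset Y, t * (k %/ 2) <= #|I| & independent I].
Proof.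
move=> indep_m_k k_gt0 k_le_m.
have Q_gt0 : 0 < 2 * m ^ 2 by rewrite muln_gt0 expn_gt0 (leq_trans k_gt0 k_le_m).
elim: t Y => [|t IHt] Y large.
  by exists set0; rewrite sub0set; split=> //; apply/independentP => x y; rewrite inE.
have mY : m <= #|Y|.
  by apply: leq_trans large; rewrite leq_pmulr // expn_gt0 Q_gt0.
have [I [IY kI indI many]] := indep_many_nonnbrs indep_m_k k_gt0 k_le_m mY.
have [J [JZ tJ indJ]] : exists J, [/\ J \subset nonnbrs Y I, t * (k %/ 2) <= #|J| & independent J].
  apply: IHt; rewrite -(leq_pmul2r Q_gt0) -mulnA -expnSr.
  exact: leq_trans large many.
have disjIJ : I :&: J = set0.
  by apply/disjoint_setI0; apply: disjointWr JZ (nonnbrs_disjoint Y I).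
exists (I :|: J); split.
- by rewrite subUset IY (subset_trans JZ (nonnbrs_sub Y I)).
- by rewrite cardsU disjIJ cards0 subn0 mulSn leq_add.
apply/independentP => x y; rewrite !inE => /orP[xI|xJ] /orP[yI|yJ] xy.
- by move/independentP: indI; apply.
- exact: nonnbrsP xI (subsetP JZ _ yJ).
- by rewrite E_sym; apply: nonnbrsP yI (subsetP JZ _ xJ).
- by move/independentP: indJ; apply.
Qed.

(* A clique meets each of [t] disjoint independent sets at most once. *)
Lemma union_of_indep_sets R s :
  (forall Y, R <= #|Y| -> exists I, [/\ I \subset Y, s <= #|I| & independent I]) ->
  forall t Y, R + t * s <= #|Y| ->
  exists S, [/\ S \subset Y, #|S| = t * s & forall K, K \subset S -> clique K -> #|K| <= t].
Proof.
move=> indep_R_s; elim=> [|t IHt] Y large.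
  exists set0; split; rewrite ?sub0set ?cards0 // => K.
  by rewrite subset0 => /eqP-> _; rewrite cards0.
have [I0 [I0Y sI0 indI0]] := indep_R_s Y (leq_trans (leq_addr _ _) large).
have [I [II0 cardI]] := exists_subset_card sI0.
have indI := independentS II0 indI0; have IY := subset_trans II0 I0Y.
have [S [SYI cardS small]] : exists S, [/\ S \subset Y :\: I, #|S| = t * s &
    forall K, K \subset S -> clique K -> #|K| <= t].
  by apply: IHt; rewrite cardsDS // cardI; move: large; rewrite mulSn; lia.
have disjIS : I :&: S = set0.
  by move: SYI; rewrite subsetD setIC => /andP[_ /disjoint_setI0].
exists (I :|: S); split.
- by rewrite subUset IY (subset_trans SYI (subsetDl _ _)).
- by rewrite cardsU disjIS cards0 subn0 cardI cardS mulSn.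
move=> K KIS clK; rewrite -(cardsID I K) -add1n leq_add ?clique_independent_card_le1 //.
apply: small; last by move=> x y; rewrite !inE => /andP[_ xK] /andP[_ yK]; apply: clK.
apply/subsetP => x; rewrite inE => /andP[xNI xK].
by move: (subsetP KIS x xK); rewrite inE (negbTE xNI).
Qed.

Lemma small_clique_subset m k t s :
  subsets_have_indep m k -> 0 < k ->
  m <= s * (t * (k %/ 2)) -> m * (2 * m ^ 2) ^ t + s * (t * (k %/ 2)) <= #|T| ->
  exists S, #|S| = m /\ forall K, K \subset S -> clique K -> #|K| <= s.
Proof.
move=> indep_m_k k_gt0 m_small large.
have k_le_m : k <= m.
  apply: subsets_have_indep_le indep_m_k _.
  exact: leq_trans m_small (leq_trans (leq_addl _ _) large).
have largeT : m * (2 * m ^ 2) ^ t + s * (t * (k %/ 2)) <= #|[set: T]| by rewrite cardsT.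
have [S0 [_ cardS0 small]] := union_of_indep_sets
  (fun Y => @indep_of_large_set m k t Y indep_m_k k_gt0 k_le_m) largeT.
have [S [SS0 cardS]] := exists_subset_card (leq_trans m_small (eq_leq (esym cardS0))).
by exists S; split=> // K KS; apply: small; apply: subset_trans KS SS0.
Qed.

End IndependentSets.

Section RealEstimates.
Local Open Scope R_scope.

Lemma INR_addn m n : INR (m + n) = INR m + INR n.
Proof. exact: plus_INR. Qed.

Lemma INR_muln m n : INR (m * n) = INR m * INR n.
Proof. exact: mult_INR. Qed.

Lemma INR_expn m n : INR (m ^ n)%N = INR m ^ n.
Proof. by elim: n => [|n IHn] //; rewrite expnS INR_muln IHn. Qed.

Lemma leq_INR m n : (m <= n)%N -> INR m <= INR n.
Proof. by move/leP/le_INR. Qed.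

Lemma INR_leq m n : INR m <= INR n -> (m <= n)%N.
Proof. by move/INR_le/leP. Qed.

Lemma exp_le_exp x y : x <= y -> exp x <= exp y.
Proof. by case/Rle_lt_or_eq_dec => [/exp_increasing/Rlt_le | ->]; last exact: Rle_refl. Qed.

Lemma ln_le_ln x y : 0 < x -> x <= y -> ln x <= ln y.
Proof. by move=> x_gt0; case/Rle_lt_or_eq_dec => [/(ln_increasing _ _ x_gt0)/Rlt_le | ->]; last exact: Rle_refl. Qed.

Lemma exp_pow a n : exp a ^ n = exp (INR n * a).
Proof.
elim: n => [|n IHn]; first by rewrite /= Rmult_0_l exp_0.
by rewrite S_INR /= IHn -exp_plus; congr exp; lra.
Qed.

Lemma floor_natP x : 0 <= x -> INR (floor_nat x) <= x < INR (floor_nat x) + 1.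
Proof.
move=> x_ge0; have [floor_le floor_gt] := base_Int_part x.
have floor_ge0 : (0 <= Int_part x)%Z.
  by apply/Z.lt_succ_r/lt_IZR; rewrite succ_IZR; lra.
by rewrite /floor_nat INR_IZR_INZ Znat.Z2Nat.id //; lra.
Qed.

Lemma INR_half n : (INR n - 1) / 2 <= INR (n %/ 2) <= INR n / 2.
Proof.
have lo : (n <= (n %/ 2) * 2 + 1)%N by rewrite {1}(divn_eq n 2) leq_add2l -ltnS ltn_mod.
have hi : ((n %/ 2) * 2 <= n)%N by rewrite leq_divM.
move: lo hi => /leq_INR + /leq_INR; rewrite INR_addn !INR_muln /= => lo hi; split; lra.
Qed.

Lemma ln_le_div40 x : 6400 <= x -> ln x <= x / 40.
Proof.
move=> x_large; rewrite -[x / 40]ln_exp; apply: ln_le_ln; first lra.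
have split_exp : exp (x / 40) = exp (x / 80) * exp (x / 80) by rewrite -exp_plus; congr exp; lra.
by have := exp_ineq1_le (x / 80); rewrite split_exp; nra.
Qed.

Lemma cube_le_exp x : 8192 <= x -> 2 * x ^ 3 <= exp (13 * x / 20).
Proof.
move=> x_large; set y := x / 8.
have y_le : y <= exp y by have := exp_ineq1_le y; lra.
have split_exp : exp (x / 2) = exp y * exp y * (exp y * exp y)
  by rewrite -!exp_plus; congr exp; rewrite /y; lra.
have quartic : y * y * (y * y) <= exp (x / 2).
  rewrite split_exp; have y_ge0 : 0 <= y by rewrite /y; lra.
  by apply: Rmult_le_compat; try apply: Rmult_le_compat; nra.
have : exp (x / 2) <= exp (13 * x / 20) by apply: exp_le_exp; lra.
have : 0 <= x ^ 3 by apply: pow_le; lra.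
rewrite /y /= in quartic *; nra.
Qed.

Lemma ln_INR_ge a n : (Z.to_nat (up (exp a)) <= n)%N -> 0 < INR n /\ a <= ln (INR n).
Proof.
move/leq_INR; have [up_gt _] := archimed (exp a); have exp_gt0 := exp_pos a.
rewrite INR_IZR_INZ Znat.Z2Nat.id => [up_le | ]; last by apply: le_IZR; lra.
by split; [lra | rewrite -[a]ln_exp; apply: ln_le_ln; lra].
Qed.

End RealEstimates.

Section Budgets.
Local Open Scope R_scope.

Variable L : R.
Hypothesis L_large : 10000 <= L.

Local Notation l := (ln L).
Local Notation M := (floor_nat (1 / 200 * L ^ 3 / l)).
Local Notation k := (floor_nat L).
Local Notation t := (floor_nat (L / (20 * l))).

Lemma lnL_bounds : 1 <= l <= L / 40.
Proof.
split; last by apply: ln_le_div40; lra.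
rewrite -[1]ln_exp; apply: ln_le_ln; [exact: exp_pos | have := exp_le_3; lra].
Qed.

Lemma floorL_bounds : (0 < k)%N /\ L - 2 <= INR (k - 1) <= L - 1.
Proof.
have [kL Lk] := @floor_natP L ltac:(lra).
have k_gt0 : (0 < k)%N by apply: INR_leq; rewrite /=; lra.
split=> //; rewrite minus_INR; last exact/leP.
by rewrite /=; lra.
Qed.

Lemma steps_bounds : L / (40 * l) <= INR t <= L / (20 * l).
Proof.
have [l_ge1 l_le] := lnL_bounds.
have u_ge2 : 2 <= L / (20 * l).
  by apply: (Rmult_le_reg_r (20 * l)); [lra | field_simplify; lra].
have [tu ut] := @floor_natP (L / (20 * l)) ltac:(lra).
have -> : L / (40 * l) = L / (20 * l) / 2 by field; lra.
split; lra.
Qed.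

Lemma size_bounds : INR M <= L ^ 2 * (L / (40 * l)) / 5 <= L ^ 3.
Proof.
have [l_ge1 _] := lnL_bounds.
have -> : L ^ 2 * (L / (40 * l)) / 5 = 1 / 200 * L ^ 3 / l by field; lra.
have L3_ge0 : 0 <= L ^ 3 by apply: pow_le; lra.
have M_ge0 : 0 <= 1 / 200 * L ^ 3 / l.
  by apply: Rmult_le_pos; [lra | apply/Rlt_le/Rinv_0_lt_compat; lra].
split; first by case: (floor_natP M_ge0).
apply: (Rmult_le_reg_r l); first lra.
by field_simplify; [nra | lra].
Qed.

Lemma clique_budget : (M <= (k - 1) * (t * (k %/ 2)))%N.
Proof.
have [l_ge1 _] := lnL_bounds.
have [_ [k1_lo _]] := floorL_bounds.
have [t_lo _] := steps_bounds.
have [M_le _] := size_bounds.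
have [_ Lk] := @floor_natP L ltac:(lra).
have [half_lo _] := INR_half k.
set v := L / (40 * l) in t_lo M_le.
have v_ge0 : 0 <= v by apply: Rmult_le_pos; [lra | apply/Rlt_le/Rinv_0_lt_compat; lra].
apply: INR_leq; rewrite !INR_muln.
apply: (Rle_trans _ ((L - 2) * (v * ((L - 2) / 2)))).
  have : L ^ 2 / 5 <= (L - 2) * ((L - 2) / 2) by rewrite /=; nra.
  by move=> /(Rmult_le_compat_l v _ _ v_ge0); nra.
apply: Rmult_le_compat; try nra; apply: Rmult_le_compat; lra.
Qed.

(* [2 M^2 <= L^7 = e^{7 l}] and [t l <= L / 20]. *)
Lemma growth_term_le : INR M * (2 * INR M ^ 2) ^ t <= L ^ 3 * exp (7 * L / 20).
Proof.
have [l_ge1 _] := lnL_bounds.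
have [_ t_hi] := steps_bounds.
have [M_le_v v_le] := size_bounds.
have M_le : INR M <= L ^ 3 by lra.
have M_ge0 := pos_INR M.
have base : 2 * INR M ^ 2 <= exp l ^ 7.
  rewrite exp_ln; last lra.
  have : INR M ^ 2 <= (L ^ 3) ^ 2 by apply: pow_incr; lra.
  by rewrite -pow_mult /=; nra.
apply: Rmult_le_compat => //; first by apply: pow_le; apply: Rmult_le_pos; [lra | apply: pow_le].
apply: (Rle_trans _ ((exp l ^ 7) ^ t)).
  by apply: pow_incr; split=> //; apply: Rmult_le_pos; [lra | apply: pow_le].
rewrite !exp_pow; apply: exp_le_exp; rewrite /=.
have : INR t * l <= L / 20.
  by apply: (Rle_trans _ (L / (20 * l) * l)); [nra | right; field; lra].
nra.
Qed.

Lemma clique_term_le : INR (k - 1) * (INR t * INR (k %/ 2)) <= L ^ 3.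
Proof.
have [l_ge1 _] := lnL_bounds.
have [_ [_ k1_hi]] := floorL_bounds.
have [_ t_hi] := steps_bounds.
have [_ half_hi] := INR_half k.
have [kL _] := @floor_natP L ltac:(lra).
have t_le : INR t <= L.
  apply: (Rle_trans _ _ _ t_hi); apply: (Rmult_le_reg_r (20 * l)); first lra.
  by rewrite /Rdiv Rmult_assoc Rinv_l; nra.
have := pos_INR (k - 1); have := pos_INR t; have := pos_INR (k %/ 2); rewrite /= => ? ? ?.
by apply: Rmult_le_compat => //; [nra | lra | apply: Rmult_le_compat; lra].
Qed.

Lemma vertex_budget :
  INR (M * (2 * M ^ 2) ^ t + (k - 1) * (t * (k %/ 2)))%N <= exp L.
Proof.
rewrite INR_addn !INR_muln INR_expn INR_muln INR_expn (_ : INR 2 = 2) //.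
have exp_split : exp L = exp (13 * L / 20) * exp (7 * L / 20).
  by rewrite -exp_plus; congr exp; lra.
have exp_ge1 : 1 <= exp (7 * L / 20) by have := exp_ineq1_le (7 * L / 20); lra.
have L3_ge0 : 0 <= L ^ 3 by apply: pow_le; lra.
have := Rmult_le_compat_r _ _ _ (Rlt_le _ _ (exp_pos (7 * L / 20))) (@cube_le_exp L ltac:(lra)).
have := growth_term_le; have := clique_term_le; rewrite exp_split => ? ? ?; nra.
Qed.

End Budgets.

Theorem mainTheorem9 :
  exists c : R, (0 < c)%R /\
  exists N : nat, forall n : nat, (N <= n)%N ->
  forall E : rel 'I_n, symmetric E -> irreflexive E ->
  ~ (forall S : {set 'I_n},
       #|S| = floor_nat (c * (ln (INR n)) ^ 3 / ln (ln (INR n)))%R ->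
       (exists K : {set 'I_n}, K \subset S /\ is_clique E K /\
                               (ln (INR n) <= INR #|K|)%R) /\
       (exists I : {set 'I_n}, I \subset S /\ is_independent E I /\
                               (ln (INR n) <= INR #|I|)%R)).
Proof.
exists (1 / 200)%R; split; first lra.
exists (Z.to_nat (up (exp 10000))) => n n_large E E_sym _ ramsey.
have [n_gt0 L_large] := ln_INR_ge n_large.
set L := ln (INR n) in L_large ramsey.
have [k_gt0 [_ k1_le]] := floorL_bounds L_large.
have [kL _] := @floor_natP L ltac:(lra).
have indep : subsets_have_indep E (floor_nat (1 / 200 * L ^ 3 / ln L)) (floor_nat L).
  move=> S /ramsey[_ [I [IS [indI LI]]]]; exists I; split=> //; first exact/independentP.
  by apply: INR_leq; apply: Rle_trans kL LI.
have [|S [cardS small]] := small_clique_subset E_sym indep k_gt0 (clique_budget L_large).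
  by rewrite card_ord; apply: INR_leq; rewrite -[INR n]exp_ln //; apply: vertex_budget.
have [[K [KS [clK LK]]] _] := ramsey S cardS.
have := Rle_trans _ _ _ LK (leq_INR (small K KS clK)); lra.
Qed.
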